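(* Let $\mathcal{CT}$ be a theory of constraints, with set of atomic constraints $\mathcal C$, that is closed under negation and under existential quantification. Then for all finite sets $C,D\subseteq\mathcal C$ such that $C\cup D$ is consistent, there exist sets of constraints $E_1,\dots,E_r$ such that $\mathit{cs}(C,D)=\{E_1,\dots,E_r\}$ is a constraint split of $C$ and $D$.
   Context: $\mathcal{CT}$ is a first-order theory with equality (identity on its domain, including the Clark Equality Theory) whose atomic formulas form the set $\mathcal C$ of (atomic) constraints; $\mathcal{CT}\models\varphi$ means $\varphi$ is valid in $\mathcal{CT}$. A finite set $\{c_1,\dots,c_n\}$ of constraints (or the corresponding conjunction) is consistent if $\mathcal{CT}\models\exists(c_1\wedge\dots\wedge c_n)$; two conjunctions $e,e'$ are mutually exclusive if $\mathcal{CT}\models\neg\exists(e\wedge e')$. $\mathit{vars}(\cdot)$ is the set of variables; for a formula $B$ and set $V$ of variables, $\exists_{-V}B$ denotes $B$ existentially quantified over its free variables not in $V$; $\forall(\cdot)$, $\exists(\cdot)$ are universal and existential closures. $\mathcal{CT}$ is closed under negation if for every $c\in\mathcal C$ there exist $d_1,\dots,d_m\in\mathcal C$ with $\mathcal{CT}\models\forall(\neg c\leftrightarrow(d_1\vee\dots\vee d_m))$ and $\mathcal{CT}\models\neg\exists(d_i\wedge d_j)$ for all $i\ne j$. $\mathcal{CT}$ is closed under existential quantification if for every $\{c_1,\dots,c_m\}\subseteq\mathcal C$ and set $V$ of variables there exist constraints $d_1,\dots,d_n\in\mathcal C$ grouped as $d_1,\dots,d_i,\dots,d_j,\dots,d_n$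 such that $\mathcal{CT}\models\forall(\exists_{-V}(c_1\wedge\dots\wedge c_m)\leftrightarrow((d_1\wedge\dots\wedge d_i)\vee\dots\vee(d_j\wedge\dots\wedge d_n)))$ (i.e. a disjunction of conjunctions of constraints). Constraint split. For $C=\{c_1,\dots,c_m\}$ and $D=\{d_1,\dots,d_n\}$, a constraint split of $C$ and $D$ is a set $\mathit{cs}(C,D)=\{E_1,\dots,E_r\}$ of sets of constraints, with $e_i$ the conjunction of the constraints in $E_i$, such that: (1) $\mathcal{CT}\models\forall((\neg\exists_{-V}(c_1\wedge\dots\wedge c_m)\wedge d_1\wedge\dots\wedge d_n)\leftrightarrow(e_1\vee\dots\vee e_r))$ where $V=\mathit{vars}(C)\cap\mathit{vars}(D)$; (2) each $e_i$ is consistent; (3) $e_i$ and $e_j$ are mutually exclusive for $i\ne j$.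
   Formalization: $\mathcal{CT}$ is a single structure with nonempty domain, and $\mathcal{CT}\models\varphi$ means truth of $\varphi$ in that structure rather than validity in every structure satisfying $\mathcal{CT}$, so $\mathcal{CT}$ is taken to be complete. The paper assumes this as well. *)

From Stdlib Require Import List Arith.
Import ListNotations.

(* A constraint theory: atomic constraints [atom] (the set C) over variables
   [nat], interpreted in the (intended model of the complete) theory CT with
   domain [dom].  [sat rho c] : the valuation rho satisfies the atom c. *)
Record CT := {
  atom : Type;
  dom : Type;
  dom_inhabited : inhabited dom;
  sat : (nat -> dom) -> atom -> Prop;
  avars : atom -> list nat;
  sat_vars : forall (rho rho' : nat -> dom) (c : atom),
      (forall x, In x (avars c) -> rho x = rho' x) -> (sat rho c <-> sat rho' c);
  ceq : nat -> nat -> atom;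
  ceq_sat : forall (rho : nat -> dom) x y, sat rho (ceq x y) <-> rho x = rho y;
  ceq_vars : forall x y, avars (ceq x y) = [x; y]
}.

Section Defs.
Variable T : CT.

Definition csat (rho : nat -> dom T) (E : list (atom T)) : Prop :=
  forall c, In c E -> sat T rho c.

Definition lvars (E : list (atom T)) : list nat := flat_map (avars T) E.

Definition consistent (E : list (atom T)) : Prop := exists rho, csat rho E.

Definition mutex (E E' : list (atom T)) : Prop :=
  forall rho, ~ (csat rho E /\ csat rho E').

(* value of  exists_{-V} (conjunction of E)  under rho: existentially
   quantify the free variables of E that are not in V *)
Definition exists_minus (V : nat -> Prop) (E : list (atom T)) (rho : nat -> dom T)
  : Prop :=
  exists rho', (forall x, ~ (In x (lvars E) /\ ~ V x) -> rho' x = rho x)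
               /\ csat rho' E.

Definition dsat (rho : nat -> dom T) (L : list (list (atom T))) : Prop :=
  exists E, In E L /\ csat rho E.

Definition closed_under_negation : Prop :=
  forall c : atom T, exists ds : list (atom T),
    (forall rho, ~ sat T rho c <-> exists d, In d ds /\ sat T rho d) /\
    (forall i j di dj, i <> j -> nth_error ds i = Some di ->
        nth_error ds j = Some dj -> mutex [di] [dj]).

Definition closed_under_existential_quantification : Prop :=
  forall (cs : list (atom T)) (V : nat -> Prop),
    exists L : list (list (atom T)),
      forall rho, exists_minus V cs rho <-> dsat rho L.

Definition constraint_split (C D : list (atom T)) (Es : list (list (atom T)))
  : Prop :=
  let V := fun x => In x (lvars C) /\ In x (lvars D) in
  (forall rho, (~ exists_minus V C rho /\ csat rho D) <-> dsat rho Es) /\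
  (forall i Ei, nth_error Es i = Some Ei -> consistent Ei) /\
  (forall i j Ei Ej, i <> j -> nth_error Es i = Some Ei ->
      nth_error Es j = Some Ej -> mutex Ei Ej).

End Defs.

(* Call a property of valuations split when it is defined by a disjunction of
   consistent, pairwise mutually exclusive conjunctions of constraints; a
   constraint split of C and D is then exactly a witness that
   (~ exists_{-V} C) /\ D is split.  Split properties are closed under
   conjunction (distribute, discarding inconsistent conjunctions) and under
   disjunction of mutually exclusive properties.  Closure under negation
   makes every negated atom split, hence every negated conjunction, through
   ~(c /\ E) <-> ~c \/ (c /\ ~E), and every negated disjunction of
   conjunctions.  Closure under existential quantification turns
   exists_{-V} C into such a disjunction. *)

From Stdlib Require Import List Classical.
Import ListNotations.

Lemma ForallOrdPairs_app {A : Type} (R : A -> A -> Prop) (l1 l2 : list A) :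
  ForallOrdPairs R l1 -> ForallOrdPairs R l2 ->
  (forall a b, In a l1 -> In b l2 -> R a b) ->
  ForallOrdPairs R (l1 ++ l2).
Proof.
  intros H1 H2 Hcross; induction H1 as [|a l1 Ha _ IH]; simpl; auto.
  constructor.
  - apply Forall_app; split; [exact Ha|].
    apply Forall_forall; intros b Hb; apply Hcross; simpl; auto.
  - apply IH; intros x y Hx Hy; apply Hcross; simpl; auto.
Qed.

Lemma ForallOrdPairs_nth_error {A : Type} (R : A -> A -> Prop) (l : list A) :
  (forall a b, R a b -> R b a) ->
  ForallOrdPairs R l <->
  (forall i j a b, i <> j -> nth_error l i = Some a -> nth_error l j = Some b -> R a b).
Proof.
  intro Rsym; split.
  - induction 1 as [|x l Hx _ IH]; intros i j a b Hij Hi Hj.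
    + destruct i; discriminate.
    + rewrite Forall_forall in Hx.
      destruct i as [|i], j as [|j]; simpl in Hi, Hj.
      * congruence.
      * injection Hi as <-; apply Hx; eapply nth_error_In; eauto.
      * injection Hj as <-; apply Rsym, Hx; eapply nth_error_In; eauto.
      * apply (IH i j); auto.
  - induction l as [|x l IH]; intro H; constructor.
    + apply Forall_forall; intros b Hb.
      destruct (In_nth_error _ _ Hb) as [k Hk].
      apply (H 0 (S k)); auto.
    + apply IH; intros i j a b Hij Hi Hj; apply (H (S i) (S j)); auto.
Qed.

Section SplitProperties.

Variable T : CT.

Definition split_prop (P : (nat -> dom T) -> Prop) : Prop :=
  exists Es, (forall rho, P rho <-> dsat T rho Es)
             /\ Forall (consistent T) Es /\ ForallOrdPairs (mutex T) Es.

Lemma mutex_sym E F : mutex T E F -> mutex T F E.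
Proof. intros H rho [HF HE]; exact (H rho (conj HE HF)). Qed.

Lemma csat_app rho E F : csat T rho (E ++ F) <-> csat T rho E /\ csat T rho F.
Proof.
  unfold csat; split.
  - intro H; split; intros c Hc; apply H, in_or_app; auto.
  - intros [HE HF] c Hc; apply in_app_or in Hc as [Hc|Hc]; auto.
Qed.

Lemma split_prop_ext P Q : (forall rho, P rho <-> Q rho) -> split_prop P -> split_prop Q.
Proof.
  intros HPQ [Es [HEs HEs']]; exists Es; split; [|exact HEs'].
  intro rho; rewrite <- HPQ; apply HEs.
Qed.

Lemma split_prop_false : split_prop (fun _ => False).
Proof.
  exists []; repeat split; try constructor; [tauto|].
  intros [E [[] _]].
Qed.

Lemma split_prop_csat E : split_prop (fun rho => csat T rho E).
Proof.
  destruct (classic (consistent T E)) as [HE|HE].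
  - exists [E]; split; [|split; repeat constructor; exact HE].
    intro rho; split.
    + intro H; exists E; simpl; auto.
    + intros [F [[<-|[]] HF]]; exact HF.
  - eapply split_prop_ext; [|exact split_prop_false].
    intro rho; split; [tauto|]; intro H; apply HE; exists rho; exact H.
Qed.

Lemma split_prop_or P Q :
  (forall rho, ~ (P rho /\ Q rho)) ->
  split_prop P -> split_prop Q -> split_prop (fun rho => P rho \/ Q rho).
Proof.
  intros HPQ [Es [HP [HEs HEs']]] [Fs [HQ [HFs HFs']]].
  exists (Es ++ Fs); repeat split.
  - rewrite HP, HQ; intros [[E [HE H]]|[E [HE H]]]; exists E; rewrite in_app_iff; auto.
  - intros [E [HE H]]; rewrite in_app_iff in HE.
    destruct HE; [left; apply HP|right; apply HQ]; exists E; auto.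
  - apply Forall_app; auto.
  - apply ForallOrdPairs_app; auto.
    intros E F HE HF rho [HrE HrF]; apply (HPQ rho); split.
    + apply HP; exists E; auto.
    + apply HQ; exists F; auto.
Qed.

Lemma split_prop_and_dsat R :
  (forall F, split_prop (fun rho => R rho /\ csat T rho F)) ->
  forall Fs, ForallOrdPairs (mutex T) Fs -> split_prop (fun rho => R rho /\ dsat T rho Fs).
Proof.
  intros HR Fs; induction Fs as [|F Fs IH]; intro HFs.
  - eapply split_prop_ext; [|exact split_prop_false].
    intro rho; split; [tauto|intros [_ [E [[] _]]]].
  - inversion HFs as [|? ? HF HFs']; subst.
    rewrite Forall_forall in HF.
    assert (Hdisj : forall rho, ~ ((R rho /\ csat T rho F) /\ (R rho /\ dsat T rho Fs))).
    { intros rho [[_ HrF] [_ [E [HE HrE]]]]; exact (HF E HE rho (conj HrF HrE)). }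
    eapply split_prop_ext; [|exact (split_prop_or _ _ Hdisj (HR F) (IH HFs'))].
    intro rho; unfold dsat; simpl; split.
    + intros [[HRr HrF]|[HRr [E [HE HrE]]]]; eauto.
    + intros [HRr [E [[<-|HE] HrE]]]; [left|right]; eauto.
Qed.

Lemma split_prop_and P Q : split_prop P -> split_prop Q -> split_prop (fun rho => P rho /\ Q rho).
Proof.
  intros [Es [HP [_ HEs]]] [Fs [HQ [_ HFs]]].
  apply split_prop_ext with (P := fun rho => dsat T rho Fs /\ dsat T rho Es).
  { intro rho; rewrite HP, HQ; tauto. }
  apply split_prop_and_dsat; [intro F|exact HEs].
  apply split_prop_ext with (P := fun rho => csat T rho F /\ dsat T rho Fs).
  { intro rho; tauto. }
  apply split_prop_and_dsat; [intro E|exact HFs].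
  eapply split_prop_ext; [|apply (split_prop_csat (F ++ E))].
  intro rho; apply csat_app.
Qed.

Lemma split_prop_dsat Es : ForallOrdPairs (mutex T) Es -> split_prop (fun rho => dsat T rho Es).
Proof.
  intro HEs; apply split_prop_ext with (P := fun rho => True /\ dsat T rho Es).
  { intro rho; tauto. }
  apply split_prop_and_dsat; [intro F|exact HEs].
  apply split_prop_ext with (P := fun rho => csat T rho F); [tauto|apply split_prop_csat].
Qed.

Hypothesis neg_closed : closed_under_negation T.

Lemma split_prop_not_sat c : split_prop (fun rho => ~ sat T rho c).
Proof.
  destruct (neg_closed c) as [ds [Hds Hdisj]].
  eapply split_prop_ext; [|apply (split_prop_dsat (map (fun d => [d]) ds))].
  - intro rho; rewrite Hds; unfold dsat, csat; split.
    + intros [E [HE HrE]]; apply in_map_iff in HE as [d [<- Hd]].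
      exists d; split; [exact Hd|apply HrE; simpl; auto].
    + intros [d [Hd Hrd]]; exists [d]; split; [exact (in_map (fun d => [d]) _ _ Hd)|].
      intros c' [Hc'|[]]; subst c'; exact Hrd.
  - apply ForallOrdPairs_nth_error; [exact mutex_sym|].
    intros i j a b Hij Hi Hj; rewrite nth_error_map in Hi, Hj.
    destruct (nth_error ds i) eqn:Hdi; [|discriminate].
    destruct (nth_error ds j) eqn:Hdj; [|discriminate].
    injection Hi as <-; injection Hj as <-; eapply Hdisj; eauto.
Qed.

Lemma split_prop_not_csat E : split_prop (fun rho => ~ csat T rho E).
Proof.
  induction E as [|c E IH].
  - eapply split_prop_ext; [|exact split_prop_false].
    intro rho; split; [tauto|]; intro H; apply H; intros _ [].
  - assert (Hsat : forall rho, csat T rho [c] <-> sat T rho c).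
    { intro rho; split; [intro H; apply H; simpl; auto|intros H c' [<-|[]]; exact H]. }
    assert (Hdisj : forall rho, ~ (~ sat T rho c /\ (csat T rho [c] /\ ~ csat T rho E))).
    { intro rho; rewrite Hsat; tauto. }
    eapply split_prop_ext;
      [|exact (split_prop_or _ _ Hdisj (split_prop_not_sat c)
                 (split_prop_and _ _ (split_prop_csat [c]) IH))].
    intro rho; change (c :: E) with ([c] ++ E); rewrite csat_app, Hsat.
    destruct (classic (sat T rho c)); tauto.
Qed.

Lemma split_prop_not_dsat Es : split_prop (fun rho => ~ dsat T rho Es).
Proof.
  induction Es as [|E Es IH].
  - eapply split_prop_ext; [|apply (split_prop_csat [])].
    intro rho; split; [intros _ [E [[] _]]|intros _ _ []].
  - eapply split_prop_ext; [|apply (split_prop_and _ _ (split_prop_not_csat E) IH)].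
    intro rho; unfold dsat; simpl; split.
    + intros [HE HEs] [F [[<-|HF] HrF]]; [exact (HE HrF)|apply HEs; eauto].
    + intro H; split; [intro; apply H; eauto|intros [F [HF HrF]]; apply H; eauto].
Qed.

End SplitProperties.

Lemma constraint_split_of_split_prop T C D :
  let V := fun x => In x (lvars T C) /\ In x (lvars T D) in
  split_prop T (fun rho => ~ exists_minus T V C rho /\ csat T rho D) ->
  exists Es, constraint_split T C D Es.
Proof.
  intros V [Es [HEs [Hcons Hmutex]]]; exists Es; split; [exact HEs|split].
  - intros i Ei Hi; rewrite Forall_forall in Hcons; apply Hcons; eapply nth_error_In; eauto.
  - apply ForallOrdPairs_nth_error; [exact (mutex_sym T)|exact Hmutex].
Qed.

Theorem proposition7p14 (T : CT) :
  closed_under_negation T ->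
  closed_under_existential_quantification T ->
  forall C D : list (atom T), consistent T (C ++ D) ->
    exists Es : list (list (atom T)), constraint_split T C D Es.
Proof.
  intros neg_closed ex_closed C D _.
  apply constraint_split_of_split_prop.
  destruct (ex_closed C (fun x => In x (lvars T C) /\ In x (lvars T D))) as [L HL].
  eapply split_prop_ext;
    [|exact (split_prop_and T _ _ (split_prop_not_dsat T neg_closed L) (split_prop_csat T D))].
  intro rho; rewrite HL; tauto.
Qed.
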